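(* Let $(X,d)$ be a compact metric space, $f:X\to X$ continuous, and $\mathcal A\subset\mathcal K(X)$ a nonempty set with the finite union property. Then $$\mathcal E(f_{\mathcal K},\mathcal A)\ge\lim_{\varepsilon\to0}\limsup_{n\to\infty}\frac{\log B(\mathcal A,n,\varepsilon)}{n}.$$
   Context: $\mathcal K(X)$ is the space of nonempty closed subsets of $X$, $f_{\mathcal K}(B)=f(B)$. $\mathcal A$ has the finite union property if $B\cup C\in\mathcal A$ for all $B,C\in\mathcal A$. $d_n(x,y)=\max_{0\le i\le n-1}d(f^ix,f^iy)$. $B,C$ are $(n,\varepsilon)$-split if $\min\{d_n(x,y):x\in B,y\in C\}>\varepsilon$; $B(\mathcal A,n,\varepsilon)$ is the maximal number of pairwise $(n,\varepsilon)$-split elements of $\mathcal A$. $A^\varepsilon_n=\{x:d_n(x,A)<\varepsilon\}$, $H^n(B,C)=\inf\{\varepsilon>0:B\subset C^\varepsilon_n,C\subset B^\varepsilon_n\}$; $N_{\mathcal K}(\mathcal Z,n,\varepsilon)$ is the smallest cardinality of $\mathcal G\subset\mathcal K(X)$ with each $B\in\mathcal Z$ within $H^n$-distance $\le\varepsilon$ of some element of $\mathcal G$; $\mathcal E(f_{\mathcal K},\mathcal Z)=\lim_{\varepsilon\to0}\limsup_n\frac{\log\log N_{\mathcal K}(\mathcal Z,n,\varepsilon)}{n}$ (convention $\log0=0$). *)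

From HB Require Import structures.
From mathcomp Require Import all_boot all_order all_algebra.
From mathcomp Require Import all_classical all_reals all_analysis.
Set Implicit Arguments. Unset Strict Implicit. Unset Printing Implicit Defensive.
Import Order.TTheory GRing.Theory Num.Theory.
Local Open Scope classical_set_scope.
Local Open Scope ring_scope.

Section Defs.
Context {R : realType} {X : metricType R}.
Variable f : X -> X.

Definition inK (B : set X) : Prop := closed B /\ B !=set0.

Definition dn (n : nat) (x y : X) : R :=
  \big[Num.max/0]_(i < n) mdist (iter i f x) (iter i f y).

(* B, C are (n,eps)-split: min{d_n(x,y) : x in B, y in C} > eps
   (the min is attained for nonempty closed sets in a compact space,
    so this is: every such d_n(x,y) exceeds eps) *)
Definition split (n : nat) (eps : R) (B C : set X) : Prop :=
  forall x y, B x -> C y -> eps < dn n x y.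

Definition Bnum (A : set (set X)) (n : nat) (eps : R) : \bar R :=
  ereal_sup [set ((size s)%:R)%:E | s in
    [set s : seq (set X) | (forall i, (i < size s)%N -> A (nth set0 s i)) /\
       (forall i j, (i < size s)%N -> (j < size s)%N -> i <> j ->
          split n eps (nth set0 s i) (nth set0 s j))]].

Definition dn_set (n : nat) (x : X) (A : set X) : R := inf [set dn n x y | y in A].

Definition nbhd_n (n : nat) (eps : R) (A : set X) : set X :=
  [set x | dn_set n x A < eps].

Definition Hn (n : nat) (B C : set X) : R :=
  inf [set eps : R | 0 < eps /\ B `<=` nbhd_n n eps C /\ C `<=` nbhd_n n eps B].

Definition NK (Z : set (set X)) (n : nat) (eps : R) : \bar R :=
  ereal_inf [set ((size G)%:R)%:E | G in
    [set G : seq (set X) | (forall i, (i < size G)%N -> inK (nth set0 G i)) /\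
       (forall B, Z B -> exists2 i, (i < size G)%N & Hn n B (nth set0 G i) <= eps)]].

End Defs.

(* log on extended reals, with the convention log 0 = 0 *)
Definition elog {R : realType} (x : \bar R) : \bar R :=
  match x with
  | EFin r => (if 0 < r then ln r else 0)%:E
  | +oo%E => +oo%E
  | -oo%E => 0%:E
  end.

Definition entK {R : realType} {X : metricType R} (f : X -> X) (Z : set (set X)) : \bar R :=
  lim ((fun eps : R => limn_esup (fun n : nat =>
          (elog (elog (NK f Z n eps)) * ((n%:R)^-1)%:E)%E)) @ 0^'+).

Definition splitRate {R : realType} {X : metricType R} (f : X -> X) (A : set (set X)) : \bar R :=
  lim ((fun eps : R => limn_esup (fun n : nat =>
          (elog (Bnum f A n eps) * ((n%:R)^-1)%:E)%E)) @ 0^'+).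

From Pilot Require Import Defs.
From HB Require Import structures.
From mathcomp Require Import all_boot all_order all_algebra.
From mathcomp Require Import all_classical all_reals all_analysis.
From mathcomp Require Import lra zify.
Import Order.TTheory GRing.Theory Num.Theory.
Local Open Scope classical_set_scope.
Local Open Scope ring_scope.
Set Implicit Arguments. Unset Strict Implicit. Unset Printing Implicit Defensive.

(* Fix n and e > 0, let s = (B_1, ..., B_m) be pairwise (n, e)-split members
   of A and G a finite family that is e/3-dense in A for H^n.  For every
   nonempty I in {1..m} the union U_I of the B_i, i in I, lies in A (finite
   union property), so it is e/3-close to some member g(I) of G.  If
   g(I) = g(J) and k is in I but not in J, a point of B_k would be within
   d_n-distance < e of some B_j, j <> k, contradicting splitness; hence
   I |-> g(I) is injective and |G| >= 2^m - 1.  Taking logarithms,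
   log B(A, n, e) <= log log N_K(A, n, e/3) + c for a constant c; dividing
   by n, the constant vanishes in the limsup, and both rates are
   nonincreasing in e, so their limits at 0+ are suprema and compare.  Compactness is only used to
   bound the diameter. *)

(* In a compact metric space the distance is bounded: by compactness the
   balls around a fixed point x0 of radius M cover X for a single M. *)
Lemma compact_mdist_bounded (R : realType) (X : metricType R) :
  compact [set: X] -> exists M : R, 0 <= M /\ forall x y : X, mdist x y <= M.
Proof.
move=> /compact_near_coveringP cpt.
have [[x0 _]|noX] := pselect (exists x : X, True); last first.
  by exists 0; split => // x; exfalso; apply: noX; exists x.
have [x _|M [_ hM]] := cpt R (pinfty_nbhs R) (fun M x => mdist x0 x < M) _.
  have near1 : \forall x' \near x, mdist x x' < 1.
    by apply: filterS (nbhsx_ballx x (1:R) ltr01) => y; rewrite ballEmdist.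
  near=> x' M.
  have hxx' : mdist x x' < 1 by near: x'.
  have hM : mdist x0 x + 1 < M by near: M; apply: nbhs_pinfty_gt; exact: num_real.
  by have := metric_triangle x0 x x'; rewrite /=; lra.
have ball0 z : mdist x0 z < `|M| + 1.
  by apply: hM => //; have := ler_norm M; lra.
exists (2 * (`|M| + 1)); split; first by rewrite mulr_ge0 // addr_ge0.
move=> x y; have := ball0 x; have := ball0 y.
have := metric_triangle x x0 y; rewrite (metric_sym x x0); lra.
Unshelve. all: by end_near.
Qed.

Section BowenDistance.
Context {R : realType} {X : metricType R}.
Variable f : X -> X.

Lemma dn_ge0 n x y : 0 <= dn f n x y.
Proof.
rewrite /dn; elim/big_ind: _ => // [a b ha hb|i _]; last exact: mdist_ge0.
by rewrite le_max ha.
Qed.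

Lemma dn_le_bound n x y (M : R) :
  0 <= M -> (forall a b : X, mdist a b <= M) -> dn f n x y <= M.
Proof.
move=> M0 HM; rewrite /dn; elim/big_ind: _ => // a b ha hb.
by rewrite ge_max ha hb.
Qed.

Lemma mdist_le_dn n x y (i : 'I_n) :
  mdist (iter i f x) (iter i f y) <= dn f n x y.
Proof. by rewrite /dn (bigD1 i) //= le_max lexx. Qed.

Lemma dn_triangle n x y z : dn f n x z <= dn f n x y + dn f n y z.
Proof.
rewrite {1}/dn; elim/big_ind: _ => [|a b ha hb|i _].
- by rewrite addr_ge0 // dn_ge0.
- by rewrite ge_max ha hb.
- apply: le_trans (metric_triangle _ (iter i f y) _) _.
  by apply: lerD; apply: mdist_le_dn.
Qed.

Lemma dn_set_le n x (C : set X) y : C y -> dn_set f n x C <= dn f n x y.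
Proof.
move=> Cy; apply: ge_inf; last by exists y.
by exists 0 => _ [z _ <-]; exact: dn_ge0.
Qed.

Lemma dn_set_lt n x (C : set X) c : C !=set0 -> dn_set f n x C < c ->
  exists2 y, C y & dn f n x y < c.
Proof.
move=> [y0 Cy0] /inf_lt [|_ [y Cy <-] lt_c]; last by exists y.
by exists (dn f n x y0), y0.
Qed.

Section Hausdorff.
Variables (M : R) (n : nat).
Hypotheses (M_ge0 : 0 <= M) (mdist_le_M : forall a b : X, mdist a b <= M).

Definition Hn_radii (B C : set X) : set R :=
  [set eps | 0 < eps /\ B `<=` nbhd_n f n eps C /\ C `<=` nbhd_n f n eps B].

(* In a bounded space every radius beyond the diameter is admissible, so
   H^n(B, C) is a genuine infimum and a strict upper bound on it is
   witnessed by an admissible radius. *)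
Lemma Hn_radii_nonempty (B C : set X) :
  B !=set0 -> C !=set0 -> Hn_radii B C !=set0.
Proof.
have dn_lt y z : dn f n y z < M + 1.
  by have := dn_le_bound n y z M_ge0 mdist_le_M; lra.
move=> [b Bb] [c Cc]; exists (M + 1); split; first by move: M_ge0; lra.
split => x _; rewrite /nbhd_n /=.
- exact: le_lt_trans (dn_set_le n x Cc) (dn_lt x c).
- exact: le_lt_trans (dn_set_le n x Bb) (dn_lt x b).
Qed.

Lemma Hn_lt (B C : set X) (a : R) : B !=set0 -> C !=set0 ->
  Hn f n B C < a -> exists2 eps, Hn_radii B C eps & eps < a.
Proof. by move=> B0 C0 /(inf_lt (Hn_radii_nonempty B0 C0)) [eps ? ?]; exists eps. Qed.

Lemma Hn_common_close (B C g : set X) (a : R) x :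
  B x -> C !=set0 -> g !=set0 -> Hn f n B g < a -> Hn f n C g < a ->
  exists2 z, C z & dn f n x z < a + a.
Proof.
move=> Bx C0 g0 Bg Cg.
have [e1 [_ [Bg_near _]] e1a] := Hn_lt (ex_intro _ x Bx) g0 Bg.
have [e2 [_ [_ gC_near]] e2a] := Hn_lt C0 g0 Cg.
have [y gy xy] := dn_set_lt g0 (Bg_near x Bx).
have [z Cz yz] := dn_set_lt C0 (gC_near y gy).
by exists z => //; have := dn_triangle n x y z; lra.
Qed.

End Hausdorff.
End BowenDistance.

Lemma union_closed_seq (T : Type) (I : eqType) (A : set (set T)) (F : I -> set T) :
  (forall B C, A B -> A C -> A (B `|` C)) ->
  forall l : seq I, l != [::] -> (forall i, i \in l -> A (F i)) ->
  A [set x | exists2 i, i \in l & F i x].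
Proof.
move=> A_union; elim=> [//|i [|j l] IH] _ lA.
  have -> : [set x | exists2 k, k \in [:: i] & F k x] = F i.
    apply/seteqP; split => x /=; last by exists i; rewrite ?inE.
    by move=> [k]; rewrite inE => /eqP ->.
  by apply: lA; rewrite inE.
have -> : [set x | exists2 k, k \in [:: i, j & l] & F k x] =
          F i `|` [set x | exists2 k, k \in [:: j & l] & F k x].
  apply/seteqP; split => x /=.
  - by move=> [k]; rewrite inE => /orP[/eqP ->|kl] Fkx; [left|right; exists k].
  - case=> [Fix|[k kl Fkx]]; first by exists i; rewrite ?inE ?eqxx.
    by exists k; rewrite // inE kl orbT.
apply: A_union; first by apply: lA; rewrite inE eqxx.
by apply: IH => // k kl; apply: lA; rewrite inE kl orbT.
Qed.

Lemma card_nonempty_subsets m :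
  #|[set I : {set 'I_m} | (0 < #|I|)%N]%SET| = (2 ^ m - 1)%N.
Proof.
have -> : [set I : {set 'I_m} | (0 < #|I|)%N]%SET = [set~ finset.set0]%SET.
  by apply/setP => I; rewrite !inE lt0n cards_eq0.
by rewrite cardsC1 -cardsT -powersetT card_powerset cardsT card_ord subn1.
Qed.

Section PairwiseSplitCount.
Context {R : realType} {X : metricType R}.
Variables (f : X -> X) (n : nat) (M e : R) (A : set (set X)) (s G : seq (set X)).
Hypotheses (M_ge0 : 0 <= M) (mdist_le_M : forall a b : X, mdist a b <= M).
Hypotheses (e_gt0 : 0 < e) (A_K : A `<=` @inK R X)
  (A_union : forall B C, A B -> A C -> A (B `|` C)).
Hypotheses (s_gt0 : (0 < size s)%N)
  (s_in_A : forall i, (i < size s)%N -> A (nth set0 s i))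
  (s_split : forall i j, (i < size s)%N -> (j < size s)%N -> i <> j ->
     Defs.split f n e (nth set0 s i) (nth set0 s j)).
Hypotheses (G_K : forall i, (i < size G)%N -> inK (nth set0 G i))
  (G_cover : forall B, A B ->
     exists2 i, (i < size G)%N & Hn f n B (nth set0 G i) <= e / 3).

Local Notation m := (size s).

Definition unions (I : {set 'I_m}) : set X :=
  [set x | exists2 i : 'I_m, i \in enum I & nth set0 s i x].

Lemma member_nonempty (i : 'I_m) : nth set0 s i !=set0.
Proof. exact: (A_K (s_in_A (ltn_ord i))).2. Qed.

Lemma unions_in_A (I : {set 'I_m}) : (0 < #|I|)%N -> A (unions I).
Proof.
move=> I0; apply: union_closed_seq => // [|i _]; last exact: s_in_A.
by rewrite -size_eq0 -cardE -lt0n.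
Qed.

Lemma unions_nonempty (I : {set 'I_m}) : (0 < #|I|)%N -> unions I !=set0.
Proof.
move=> /card_gt0P[k kI]; have [x skx] := member_nonempty k.
by exists x, k; rewrite ?mem_enum.
Qed.

Lemma net_choice : exists phi : {set 'I_m} -> 'I_(size G), forall I : {set 'I_m},
  (0 < #|I|)%N -> Hn f n (unions I) (nth set0 G (phi I)) <= e / 3.
Proof.
have [i0 i0G _] := G_cover (s_in_A s_gt0).
suff /choice[phi phiP] : forall I : {set 'I_m}, exists j : 'I_(size G),
    (0 < #|I|)%N -> Hn f n (unions I) (nth set0 G j) <= e / 3 by exists phi.
move=> I; case: (boolP (0 < #|I|)%N) => [/unions_in_A/G_cover[i iG close]|_].
  by exists (Ordinal iG).
by exists (Ordinal i0G).
Qed.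

(* Distinct nonempty index sets are sent to distinct net members: if k is in
   I but not in J and phi I = phi J, a point of the k-th member of s would
   be d_n-closer than e to a point of unions J, i.e. to another member. *)
Lemma net_choice_injective (phi : {set 'I_m} -> 'I_(size G)) :
  (forall I : {set 'I_m},
     (0 < #|I|)%N -> Hn f n (unions I) (nth set0 G (phi I)) <= e / 3) ->
  {in [set I : {set 'I_m} | (0 < #|I|)%N]%SET &, injective phi}.
Proof.
move=> phiP.
have separate (I J : {set 'I_m}) k : k \in I -> k \notin J ->
    (0 < #|I|)%N -> (0 < #|J|)%N -> phi I <> phi J.
  move=> kI kJ I0 J0 phiIJ; have [x skx] := member_nonempty k.
  have lt32 : e / 3 < e / 2 by rewrite ltr_pM2l // ltf_pV2 ?posrE //; lra.
  have xI : unions I x by exists k; rewrite ?mem_enum.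
  have g0 := (G_K (ltn_ord (phi I))).2.
  have closeI := le_lt_trans (phiP I I0) lt32.
  have closeJ : Hn f n (unions J) (nth set0 G (phi I)) < e / 2.
    by rewrite phiIJ; exact: le_lt_trans (phiP J J0) lt32.
  have [z [j jJ sjz] xz] :=
    Hn_common_close M_ge0 mdist_le_M xI (unions_nonempty J0) g0 closeI closeJ.
  have kj : (k : nat) <> j by move=> /val_inj kj; move: kJ; rewrite kj -mem_enum jJ.
  by have := s_split (ltn_ord k) (ltn_ord j) kj skx sjz; lra.
move=> I J; rewrite !inE => I0 J0 phiIJ; apply/setP => k.
case kI: (k \in I); case kJ: (k \in J) => //; exfalso.
- by apply: (separate I J k) => //; rewrite kJ.
- by apply: (separate J I k) => //; rewrite kI.
Qed.

Lemma pairwise_split_card : (2 ^ m - 1 <= size G)%N.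
Proof.
have [phi phiP] := net_choice.
rewrite -card_nonempty_subsets -(card_in_imset (net_choice_injective phiP)).
by apply: leq_trans (max_card _) _; rewrite card_ord.
Qed.

End PairwiseSplitCount.

Section NatValuedExtrema.
Context {R : realType} {T : Type}.
Variables (S : set T) (g : T -> nat).

Lemma ereal_inf_nat_attained :
  ereal_inf [set ((g t)%:R : R)%:E | t in S] = +oo%E \/
  exists2 t, S t & ereal_inf [set ((g t)%:R : R)%:E | t in S] = ((g t)%:R)%:E.
Proof.
have [[t0 St0]|noS] := pselect (exists t, S t); last first.
  left; have -> : [set ((g t)%:R : R)%:E | t in S] = set0.
    by apply/seteqP; split => // x [t St _]; apply: noS; exists t.
  exact: ereal_inf0.
right; pose P k := `[< exists2 t, S t & g t = k >].
have exP : exists k, P k by exists (g t0); apply/asboolP; exists t0.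
case: (ex_minnP exP) => N /asboolP [t St <-] minN.
exists t => //; apply/eqP; rewrite eq_le; apply/andP; split.
  by apply: ereal_inf_lbound; exists t.
apply: le_ereal_inf_tmp => _ [t' St' <-]; rewrite lee_fin ler_nat.
by apply: minN; apply/asboolP; exists t'.
Qed.

Lemma ereal_sup_nat_attained : S !=set0 ->
  (forall b : nat, exists2 t, S t & (b < g t)%N) \/
  exists2 t, S t & ereal_sup [set ((g t)%:R : R)%:E | t in S] = ((g t)%:R)%:E.
Proof.
move=> [t0 St0].
have [[b ub]|nub] := pselect (exists b : nat, forall t, S t -> (g t <= b)%N); last first.
  left => b; apply: contra_notP nub => h; exists b => t St.
  by rewrite leqNgt; apply/negP => hb; apply: h; exists t.
right; pose P k := `[< exists2 t, S t & g t = k >].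
have exP : exists k, P k by exists (g t0); apply/asboolP; exists t0.
have ubP k : P k -> (k <= b)%N by move=> /asboolP [t St <-]; exact: ub.
case: (ex_maxnP exP ubP) => N /asboolP [t St <-] maxN.
exists t => //; apply/eqP; rewrite eq_le; apply/andP; split.
  apply: ge_ereal_sup => _ [t' St' <-]; rewrite lee_fin ler_nat.
  by apply: maxN; apply/asboolP; exists t'.
by apply: ereal_sup_ubound; exists t.
Qed.

End NatValuedExtrema.

Section IteratedLog.
Context {R : realType}.
Local Open Scope ereal_scope.

(* The additive slack c = ln 2 + |ln ln 2|, which absorbs the convention
   log 0 = 0 below 2 and the loss in passing from 2^m - 1 to 2^(m-1). *)
Definition lnln_slack : R := (ln 2 + `|ln (ln (2:R))|)%R.

Lemma ln2_gt0 : (0 < ln (2:R))%R.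
Proof. by apply: ln_gt0; lra. Qed.

Lemma lnln_slack_ge0 : (0 <= lnln_slack)%R.
Proof.
by rewrite /lnln_slack; have := ln2_gt0; have := normr_ge0 (ln (ln (2:R))); lra.
Qed.

Lemma elog2_nat (N : nat) : elog (elog ((N%:R : R)%:E)) =
  (if (2 <= N)%N then ln (ln (N%:R : R)) else 0)%:E.
Proof.
case: N => [|[|N]] /=; first by rewrite ltxx /= ltxx.
  by rewrite ltr01 ln1 ltxx.
have N2 : (2 <= (N.+2)%:R :> R)%R by rewrite (ler_nat R 2 N.+2).
have -> : (0 < (N.+2)%:R :> R)%R by lra.
by rewrite /= ifT //; apply: ln_gt0; lra.
Qed.

Lemma elog2_nat_ge (N : nat) : ((- lnln_slack)%R)%:E <= elog (elog ((N%:R : R)%:E)).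
Proof.
rewrite elog2_nat lee_fin; case: ifP => N2; last by rewrite lerNl oppr0 lnln_slack_ge0.
have N2' : (2 <= N%:R :> R)%R by rewrite (ler_nat R 2 N).
have : (ln (ln (2:R)) <= ln (ln (N%:R : R)))%R.
  rewrite ler_ln ?posrE ?ln2_gt0 //; last by apply: ln_gt0; lra.
  by rewrite ler_ln ?posrE //; lra.
have : (- ln (ln (2:R)) <= `|ln (ln (2:R))|)%R by rewrite -normrN ler_norm.
by have := ln2_gt0; rewrite /lnln_slack; lra.
Qed.

Lemma elog2_nat_le (N1 N2 : nat) : (N1 <= N2)%N ->
  elog (elog ((N1%:R : R)%:E)) <= elog (elog ((N2%:R : R)%:E)) + lnln_slack%:E.
Proof.
move=> N12; have [N1_lt2|N1_ge2] := ltnP N1 2.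
  rewrite [X in X <= _]elog2_nat leqNgt N1_lt2 /=.
  by have := leeD (elog2_nat_ge N2) (lexx lnln_slack%:E); rewrite -EFinD addNr.
rewrite !elog2_nat N1_ge2 (leq_trans N1_ge2 N12) -EFinD lee_fin.
have N1' : (2 <= N1%:R :> R)%R by rewrite (ler_nat R 2 N1).
have N12' : (N1%:R <= N2%:R :> R)%R by rewrite ler_nat.
have : (ln (ln (N1%:R : R)) <= ln (ln (N2%:R : R)))%R.
  rewrite ler_ln ?posrE; [|apply: ln_gt0; lra|apply: ln_gt0; lra].
  by rewrite ler_ln ?posrE //; lra.
by have := lnln_slack_ge0; lra.
Qed.

Lemma ln_add_lnln2_le (k N : nat) : (1 <= k)%N -> (2 ^ k <= N)%N ->
  (ln (k%:R : R) + ln (ln (2:R)) <= ln (ln (N%:R : R)))%R.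
Proof.
move=> k_gt0 kN.
have N_gt0 : (0 < N%:R :> R)%R by rewrite ltr0n; apply: leq_trans kN; rewrite expn_gt0.
have lnN_ge : (ln (2:R) *+ k <= ln (N%:R : R))%R.
  rewrite -lnXn; last lra.
  have pow_gt0 : (0 < (2:R) ^+ k)%R by apply: exprn_gt0; lra.
  by rewrite ler_ln ?posrE // -(natrX R 2 k) ler_nat.
have lnN_gt0 : (0 < ln (N%:R : R))%R.
  by apply: lt_le_trans lnN_ge; rewrite mulrn_wgt0 ?ln2_gt0.
rewrite -lnM ?posrE ?ln2_gt0 ?ltr0n // ler_ln ?posrE //; last first.
  by rewrite mulr_gt0 ?ln2_gt0 ?ltr0n.
by rewrite mulrC mulr_natr.
Qed.

Lemma elog_le_elog2_pow (m N : nat) : (1 <= m)%N -> (2 ^ m - 1 <= N)%N ->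
  elog ((m%:R : R)%:E) <= elog (elog ((N%:R : R)%:E)) + lnln_slack%:E.
Proof.
case: m => [//|[|k]] _ kN.
  rewrite /= ltr01 ln1.
  by have := leeD (elog2_nat_ge N) (lexx lnln_slack%:E); rewrite -EFinD addNr.
have kN' : (2 ^ k.+1 <= N)%N.
  by move: kN; rewrite (expnS 2 k.+1); have := expn_gt0 2 k.+1; lia.
have N_ge2 : (2 <= N)%N by apply: leq_trans kN'; rewrite expnS leq_pmulr ?expn_gt0.
rewrite elog2_nat N_ge2 /= -EFinD lee_fin ltr0n /=.
have ln_succ : (ln ((k.+2)%:R : R) <= ln 2 + ln ((k.+1)%:R : R))%R.
  rewrite -lnM ?posrE ?ltr0n // ler_ln ?posrE ?ltr0n ?mulr_gt0 ?ltr0n //.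
  by rewrite -(natrM R 2 k.+1) ler_nat; lia.
have := ln_add_lnln2_le (isT : (1 <= k.+1)%N) kN'.
have : (- ln (ln (2:R)) <= `|ln (ln (2:R))|)%R by rewrite -normrN ler_norm.
by rewrite /lnln_slack; lra.
Qed.

End IteratedLog.

Section Limits.
Context {R : realType}.
Local Open Scope ereal_scope.

Lemma limn_esup_scaled_le (a b : nat -> \bar R) (c : R) : (0 <= c)%R ->
  (forall n, a n <= b n + c%:E) ->
  limn_esup (fun n => a n * (((n%:R : R)^-1)%R)%:E) <=
  limn_esup (fun n => b n * (((n%:R : R)^-1)%R)%:E).
Proof.
move=> c_ge0 ab; set x := fun n => _; set y := fun n => _.
have xy n : (0 < n)%N -> x n <= y n + (c / n%:R)%:E.
  move=> n_gt0; have n_inv_ge0 : (0 <= (n%:R : R)^-1)%R by rewrite invr_ge0.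
  apply: le_trans (lee_wpmul2r _ (ab n)) _; first by rewrite lee_fin.
  by rewrite muleDl ?fin_num_adde_defl // -EFinM.
rewrite /limn_esup /limf_esup.
apply: le_ereal_inf_tmp => _ [V [N0 _ tailV] <-].
apply/lee_addgt0Pr => d d_gt0.
(* Beyond N, the error term c / n is below d. *)
pose N := maxn (maxn N0 1) (Num.truncn (c / d)).+1.
apply: le_trans (ereal_inf_lbound _) _; first by exists [set k | (N <= k)%N]; first exists N.
apply: ge_ereal_sup => _ [k /= Nk <-].
have k_gt0 : (0 < k)%N by move: Nk; rewrite /N; lia.
apply: le_trans (xy k k_gt0) _; apply: leeD.
  by apply: ereal_sup_ubound; exists k => //; apply: tailV; move: Nk; rewrite /N /=; lia.
have k_pos : (0 < k%:R :> R)%R by rewrite ltr0n.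
have cd_lt_k : (c / d < k%:R)%R.
  apply: lt_le_trans (truncnS_gt (c / d)) _.
  by rewrite ler_nat; apply: leq_trans Nk; exact: leq_maxr.
rewrite ltr_pdivrMr // in cd_lt_k.
by rewrite lee_fin ler_pdivrMr // mulrC; lra.
Qed.

Lemma lim_at_right0_nonincreasing (F : R -> \bar R) :
  {in `]0, +oo[%R &, {homo F : x y / (x <= y)%R >-> y <= x}} ->
  lim (F @ 0^'+) = ereal_sup [set F x | x in [set` `]0, +oo[%R]].
Proof.
move=> F_anti.
by apply: cvg_lim; [exact: ereal_hausdorff|exact: nonincreasing_at_right_cvge].
Qed.

End Limits.

Section Rates.
Context {R : realType} {X : metricType R}.
Variables (f : X -> X) (A : set (set X)).
Local Open Scope ereal_scope.

Lemma elog_le (x y : \bar R) : 1 <= x -> x <= y -> elog x <= elog y.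
Proof.
case: x => [r| |] //; case: y => [r'| |] //= r_ge1 rr'; last exact: leey.
rewrite !lee_fin in r_ge1 rr'.
have r_gt0 : (0 < r)%R by lra.
have r'_gt0 : (0 < r')%R by lra.
by rewrite r_gt0 r'_gt0 lee_fin ler_ln.
Qed.

(* A single element of A is a pairwise split family. *)
Lemma Bnum_ge1 n e B0 : A B0 -> 1 <= Bnum f A n e.
Proof.
move=> AB0; apply: le_ereal_sup_tmp; exists ((size [:: B0])%:R%:E) => //.
exists [:: B0] => //; split; first by case.
by case=> [|i] [|j].
Qed.

(* Splitting at a larger scale is harder and covering at a larger scale is
   easier: both counts are nonincreasing in eps. *)
Lemma Bnum_anti n e1 e2 : (e1 <= e2)%R -> Bnum f A n e2 <= Bnum f A n e1.
Proof.
move=> e12; apply: ereal_sup_le => _ [s [sA s_split] <-]; apply: imageP; split => //.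
by move=> i j si sj ij x y Bx Cy; exact: le_lt_trans e12 (s_split i j si sj ij x y Bx Cy).
Qed.

Lemma NK_anti n e1 e2 : (e1 <= e2)%R -> NK f A n e2 <= NK f A n e1.
Proof.
move=> e12; apply: ereal_inf_le_tmp => _ [G [GK G_cover] <-]; apply: imageP; split => //.
by move=> B AB; have [i iG close] := G_cover B AB; exists i => //; exact: le_trans e12.
Qed.

Lemma NK_attained n e : NK f A n e = +oo \/ exists2 G : seq (set X),
  (forall i, (i < size G)%N -> inK (nth set0 G i)) /\
  (forall B, A B -> exists2 i, (i < size G)%N & (Hn f n B (nth set0 G i) <= e)%R) &
  NK f A n e = ((size G)%:R)%:E.
Proof. exact: ereal_inf_nat_attained. Qed.

Definition split_rate_at (eps : R) : \bar R :=
  limn_esup (fun n => elog (Bnum f A n eps) * (((n%:R : R)^-1)%R)%:E).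

Definition entropy_at (eps : R) : \bar R :=
  limn_esup (fun n => elog (elog (NK f A n eps)) * (((n%:R : R)^-1)%R)%:E).

Lemma split_rate_at_anti B0 : A B0 ->
  {in `]0, +oo[%R &, {homo split_rate_at : x y / (x <= y)%R >-> y <= x}}.
Proof.
move=> AB0 e1 e2 _ _ e12; apply: (limn_esup_scaled_le (c := 0%R)) => // n.
by rewrite adde0; apply: elog_le; [exact: Bnum_ge1 AB0|exact: Bnum_anti].
Qed.

Lemma entropy_at_anti :
  {in `]0, +oo[%R &, {homo entropy_at : x y / (x <= y)%R >-> y <= x}}.
Proof.
move=> e1 e2 _ _ e12; apply: (limn_esup_scaled_le lnln_slack_ge0) => n.
have := NK_anti n e12.
have [->|[G1 _ ->]] := NK_attained n e1; first by rewrite /= addye ?leey.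
have [->|[G2 _ ->]] := NK_attained n e2; first by [].
by rewrite lee_fin ler_nat; exact: elog2_nat_le.
Qed.

Lemma elog_Bnum_le (M e : R) n B0 : (0 <= M)%R ->
  (forall a b : X, (mdist a b <= M)%R) -> (0 < e)%R ->
  A `<=` @inK R X -> A B0 -> (forall B C, A B -> A C -> A (B `|` C)) ->
  elog (Bnum f A n e) <= elog (elog (NK f A n (e / 3))) + lnln_slack%:E.
Proof.
move=> M_ge0 HM e_gt0 AK AB0 A_union.
have := Bnum_ge1 n e AB0; rewrite /Bnum; set Split := [set s | _].
have Split0 : Split !=set0 by exists [:: B0]; split; [case|case=> [|i] [|j]].
have [->|[G [GK G_cover] ->]] := NK_attained n (e / 3).
  by rewrite /= addye ?leey.
have [unbounded|[s [sA s_split] ->]] := ereal_sup_nat_attained (R := R) size Split0.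
  (* arbitrarily large split families contradict 2^m - 1 <= |G| *)
  have [s [sA s_split] Gs] := unbounded (size G); exfalso.
  have := pairwise_split_card M_ge0 HM e_gt0 AK A_union
    (leq_ltn_trans (leq0n _) Gs) sA s_split GK G_cover.
  by have := ltn_expl (size s) (ltnSn 1); lia.
rewrite lee_fin ler1n => s_gt0; apply: elog_le_elog2_pow => //.
exact: pairwise_split_card M_ge0 HM e_gt0 AK A_union s_gt0 sA s_split GK G_cover.
Qed.

End Rates.

Theorem lemma4p4 (R : realType) (X : metricType R) (f : X -> X)
  (A : set (set X)) :
  compact [set: X] ->
  continuous f ->
  A `<=` (@inK R X) ->
  A !=set0 ->
  (forall B C, A B -> A C -> A (B `|` C)) ->
  (splitRate f A <= entK f A)%E.
Proof.
move=> cpt _ AK [B0 AB0] A_union.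
have [M [M_ge0 HM]] := compact_mdist_bounded cpt.
have -> : splitRate f A = ereal_sup [set split_rate_at f A e | e in [set` `]0, +oo[]].
  exact: (@lim_at_right0_nonincreasing _ (split_rate_at f A) (split_rate_at_anti f AB0)).
have -> : entK f A = ereal_sup [set entropy_at f A e | e in [set` `]0, +oo[]].
  exact: (@lim_at_right0_nonincreasing _ (entropy_at f A) (entropy_at_anti f A)).
apply: ge_ereal_sup => _ [e e_pos <-]; move: e_pos; rewrite /= in_itv /= andbT => e_gt0.
apply: (@le_trans _ _ (entropy_at f A (e / 3))).
  apply: (limn_esup_scaled_le lnln_slack_ge0) => n.
  exact: elog_Bnum_le M_ge0 HM e_gt0 AK AB0 A_union.
by apply: ereal_sup_ubound; exists (e / 3); rewrite //= in_itv /= andbT divr_gt0.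
Qed.
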